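(* Let $r=(r_0,r_1,r_2,r_3,r_4)\in\mathbb Z^5$ be a quintuple of distinct integers. There is a constant $c=c(r)>0$ such that for every $N\in\mathbb N$ there is a subset $B\subseteq\{0,1,\dots,N-1\}$ with $|B|>Ne^{-c\sqrt{\log N}}$ such that there is no non-constant polynomial $P\in\mathbb Q[x]$ of degree at most $2$ with $P(r_i)\in B$ for all $i=0,\dots,4$.
   Context: The paper phrases the conclusion as ''$B$ does not contain any QC5($r$)'', where a set $\{a_0,\dots,a_4\}\subseteq\mathbb Z$ is QC5($r$) if $a_i=P(r_i)$ for some $P\in\mathbb Q[x]$ of degree at most 2. *)

From HB Require Import structures.
From mathcomp Require Import all_boot all_order all_algebra.
From mathcomp Require Import all_classical all_reals all_analysis.
From mathcomp Require Import Rstruct.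
Set Implicit Arguments. Unset Strict Implicit. Unset Printing Implicit Defensive.
Import Order.TTheory GRing.Theory Num.Theory.
Local Open Scope ring_scope.

Definition contains_QC5 (r : 'I_5 -> int) (N : nat) (B : {set 'I_N}) : Prop :=
  exists P : {poly rat}, (2 <= size P <= 3)%N /\
    forall i : 'I_5, exists2 b : 'I_N, b \in B & P.[(r i)%:~R] = (nat_of_ord b)%:R.

(* Behrend's construction.  Write the elements of B in base d = C m with n
   digits in [0, m), and keep the numbers whose digit vector x lies on a
   sphere |x|^2 = R; by pigeonhole one sphere carries at least a 1/(n m^2 + 1)
   share of the m^n digit vectors, and n ~ sqrt (ln N), m ~ exp (sqrt (ln N))
   give |B| >= N exp (-c sqrt (ln N)).
   If P(r_i) = b_i in B with deg P <= 2, the b_i satisfy linear relations whose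
   integer coefficients depend only on r (4x4 determinants).  As d is large
   compared with these coefficients, no carries occur, so the relations hold
   digit by digit, and for every digit position k the digits x_i(k) are the
   values at r_i of a quadratic q_k.  The fourth divided difference at
   r_0, ..., r_4 kills constants and maps q_k^2 to (lead q_k)^2, so summing
   over k and using |x_i|^2 = R for all i gives sum_k (lead q_k)^2 = 0; the
   second divided difference at r_0, r_1, r_2 then kills the linear terms.
   Hence all q_k are constant, all x_i coincide, and P takes a single value
   at five points, so P is constant. *)

From HB Require Import structures.
From mathcomp Require Import all_boot all_order all_algebra.
From mathcomp Require Import all_classical all_reals all_analysis.
From mathcomp Require Import Rstruct.
From mathcomp Require Import ring lra zify.
Set Implicit Arguments. Unset Strict Implicit. Unset Printing Implicit Defensive.
Import Order.TTheory GRing.Theory Num.Theory.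
Local Open Scope ring_scope.

Section Interpolation.
Variables (F : fieldType) (n : nat) (t : 'I_n.+1 -> F).
Hypothesis t_inj : injective t.

Definition node_poly (i : 'I_n.+1) : {poly F} := \prod_(j | j != i) ('X - (t j)%:P).

Definition interp_poly (z : 'I_n.+1 -> F) : {poly F} :=
  \sum_i (z i / (node_poly i).[t i]) *: node_poly i.

Lemma size_node_poly i : size (node_poly i) = n.+1.
Proof.
rewrite /node_poly -big_filter size_prod_XsubC size_filter.
by rewrite -sum1_count sum1dep_card cardsE cardC1 card_ord.
Qed.

Lemma horner_node_poly_other i k : k != i -> (node_poly i).[t k] = 0.
Proof. by move=> ki; rewrite horner_prod (bigD1 k) //= hornerXsubC subrr mul0r. Qed.

Lemma node_poly_neq0 i : (node_poly i).[t i] != 0.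
Proof.
rewrite horner_prod; apply/prodf_neq0 => j ji.
by rewrite hornerXsubC subr_eq0 (inj_eq t_inj) eq_sym.
Qed.

Lemma horner_interp z k : (interp_poly z).[t k] = z k.
Proof.
rewrite horner_sum (bigD1 k) //= big1 => [|i ik]; last first.
  by rewrite hornerZ (horner_node_poly_other (k := k)) ?mulr0 // eq_sym.
by rewrite hornerZ addr0 divfK ?node_poly_neq0.
Qed.

Lemma size_interp z : (size (interp_poly z) <= n.+1)%N.
Proof.
apply: leq_trans (size_sum _ _ _) _; apply/bigmax_leqP => i _.
by rewrite -(size_node_poly i) size_scale_leq.
Qed.

Lemma interp_horner (p : {poly F}) :
  (size p <= n.+1)%N -> interp_poly (fun i => p.[t i]) = p.
Proof.
move=> p_size; apply/eqP; rewrite eq_sym -subr_eq0; apply/eqP.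
apply: (roots_geq_poly_eq0 (rs := [seq t i | i <- enum 'I_n.+1])).
- by apply/allP => _ /mapP [i _ ->]; rewrite /root hornerD hornerN horner_interp subrr.
- by rewrite map_inj_uniq ?enum_uniq.
- rewrite size_map size_enum_ord; apply: leq_trans (size_polyD _ _) _.
  by rewrite size_polyN geq_max p_size size_interp.
Qed.

Lemma coef_interp z : (interp_poly z)`_n = \sum_i z i / (node_poly i).[t i].
Proof.
rewrite coef_sum; apply: eq_bigr => i _; rewrite coefZ.
have /monicP : node_poly i \is monic by apply: monic_prod_XsubC.
by rewrite lead_coefE size_node_poly => ->; rewrite mulr1.
Qed.

Lemma divided_difference (p : {poly F}) : (size p <= n.+1)%N ->
  p`_n = \sum_i p.[t i] / (node_poly i).[t i].
Proof. by move=> p_size; rewrite -coef_interp interp_horner. Qed.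

End Interpolation.

Lemma size_le1_const_on (F : idomainType) (p : {poly F}) (c : F) (s : seq F) :
  uniq s -> (size p <= size s)%N -> {in s, forall x, p.[x] = c} -> (size p <= 1)%N.
Proof.
case: s => [|x0 s] s_uniq p_size p_const; first by apply: leq_trans p_size _.
suff -> : p = c%:P by apply: size_polyC_leq1.
apply/eqP; rewrite -subr_eq0; apply/eqP.
apply: (roots_geq_poly_eq0 (rs := x0 :: s)) => //.
- by apply/allP => x xs; rewrite /root hornerD hornerN hornerC p_const // subrr.
- apply: leq_trans (size_polyD _ _) _; rewrite size_polyN geq_max p_size.
  by apply: leq_trans (size_polyC_leq1 c) _.
Qed.

Lemma coef_sqr_top (R : comRingType) (d : nat) (p : {poly R}) :
  (size p <= d.+1)%N -> (p * p)`_d.*2 = p`_d ^+ 2.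
Proof.
move=> /leq_sizeP p_high.
have d_lt : (d < d.*2.+1)%N by rewrite ltnS -addnn leq_addr.
rewrite coefM (bigD1 (Ordinal d_lt)) //= big1 => [|j jd].
  by rewrite addr0 expr2 -addnn addnK.
move: jd; rewrite -val_eqE /= => jd.
have [dj | jd'] := ltnP d j; first by rewrite p_high ?mul0r.
by rewrite (p_high (d.*2 - j)%N) ?mulr0 //; lia.
Qed.

Lemma equal_norms_polys_const (F : realFieldType) (d n : nat)
    (t : 'I_d.*2.+1 -> F) (q : 'I_n -> {poly F}) :
  injective t -> (forall k, size (q k) <= d.+1)%N ->
  (forall i j, \sum_k (q k).[t i] ^+ 2 = \sum_k (q k).[t j] ^+ 2) ->
  forall k, (size (q k) <= 1)%N.
Proof.
elim: d t q => [|d IH] t q t_inj q_size norms; first exact: q_size.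
have sum_w : \sum_i ((node_poly t i).[t i])^-1 = 0.
  have := divided_difference t_inj (p := 1); rewrite size_poly1 coefC => /(_ isT).
  by under eq_bigr do rewrite hornerC mul1r.
have top_sqr : \sum_k (q k)`_d.+1 ^+ 2 = 0.
  transitivity (\sum_k \sum_i (q k).[t i] ^+ 2 / (node_poly t i).[t i]).
    apply: eq_bigr => k _; rewrite -coef_sqr_top // (divided_difference t_inj).
      by apply: eq_bigr => i _; rewrite hornerM expr2.
    apply: leq_trans (size_mul_leq _ _) _; have := q_size k; move: (size (q k)) => s; lia.
  rewrite exchange_big; under eq_bigr do rewrite -mulr_suml (norms _ ord0).
  by rewrite -mulr_sumr sum_w mulr0.
have top0 k : (q k)`_d.+1 = 0.
  move/eqP: top_sqr; rewrite psumr_eq0 => [/allP/(_ k)|k' _]; last exact: sqr_ge0.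
  by rewrite mem_index_enum sqrf_eq0 => /(_ isT) /eqP.
have widen_le : (d.*2.+1 <= d.+1.*2.+1)%N by rewrite doubleS; lia.
apply: (IH (fun i => t (widen_ord widen_le i))) => [i j /t_inj/(congr1 val) /= /val_inj //|k|i j].
- apply/leq_sizeP => j; rewrite leq_eqVlt => /orP [/eqP <- // | hj].
  by move/leq_sizeP: (q_size k); apply.
- exact: norms.
Qed.

Definition vdm3 (R : ringType) (x y z : R) := (y - x) * (z - x) * (z - y).

(* The 4x4 determinant with rows (1, t_i, t_i^2, z_i), expanded along the last
   column; for distinct t_i it vanishes iff the points (t_i, z_i) lie on the
   graph of a polynomial of degree at most 2. *)
Definition quad_det (R : ringType) (t0 t1 t2 t3 z0 z1 z2 z3 : R) :=
  vdm3 t1 t2 t3 * z0 - vdm3 t0 t2 t3 * z1 + vdm3 t0 t1 t3 * z2 - vdm3 t0 t1 t2 * z3.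

Lemma horner_size3 (R : ringType) (p : {poly R}) x :
  (size p <= 3)%N -> p.[x] = p`_0 + p`_1 * x + p`_2 * x ^+ 2.
Proof.
move=> p3; rewrite (horner_coef_wide x p3) !big_ord_recr big_ord0 /=.
by rewrite expr0 expr1 mulr1 add0r.
Qed.

Lemma quad_det_horner (R : comRingType) (p : {poly R}) t0 t1 t2 t3 :
  (size p <= 3)%N -> quad_det t0 t1 t2 t3 p.[t0] p.[t1] p.[t2] p.[t3] = 0.
Proof. by move=> p3; rewrite !horner_size3 // /quad_det /vdm3; ring. Qed.

Lemma quad_det_eq0_horner (R : idomainType) (p : {poly R}) t0 t1 t2 t3 z3 :
  t0 != t1 -> t0 != t2 -> t1 != t2 -> (size p <= 3)%N ->
  quad_det t0 t1 t2 t3 p.[t0] p.[t1] p.[t2] z3 = 0 -> z3 = p.[t3].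
Proof.
move=> t01 t02 t12 p3 det0.
have : vdm3 t0 t1 t2 * (z3 - p.[t3]) =
    quad_det t0 t1 t2 t3 p.[t0] p.[t1] p.[t2] p.[t3] - quad_det t0 t1 t2 t3 p.[t0] p.[t1] p.[t2] z3.
  by rewrite /quad_det; ring.
have vdm_neq0 : vdm3 t0 t1 t2 != 0 by rewrite !mulf_neq0 // subr_eq0 eq_sym.
rewrite quad_det_horner // det0 subrr => /eqP.
by rewrite mulf_eq0 (negbTE vdm_neq0) subr_eq0 => /eqP.
Qed.

Lemma rmorph_quad_det (R S : comRingType) (f : {rmorphism R -> S}) t0 t1 t2 t3 z0 z1 z2 z3 :
  f (quad_det t0 t1 t2 t3 z0 z1 z2 z3) =
  quad_det (f t0) (f t1) (f t2) (f t3) (f z0) (f z1) (f z2) (f z3).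
Proof. by rewrite /quad_det /vdm3 !(rmorphB, rmorphD, rmorphM). Qed.

Lemma quad_dets_eq0_quadratic (F : fieldType) (t z : 'I_5 -> F) : injective t ->
  (forall j, quad_det (t 0) (t 1) (t 2) (t j) (z 0) (z 1) (z 2) (z j) = 0) ->
  exists2 p : {poly F}, (size p <= 3)%N & forall i, p.[t i] = z i.
Proof.
move=> t_inj dets0; pose w (i : 'I_3) : 'I_5 := widen_ord (isT : (3 <= 5)%N) i.
have tw_inj : injective (t \o w) by move=> i j /t_inj /(congr1 val) /= /val_inj.
set p := interp_poly (t \o w) (z \o w).
have p_first (i : 'I_5) : (i < 3)%N -> p.[t i] = z i.
  move=> i3; have := horner_interp tw_inj (z \o w) (Ordinal i3).
  by rewrite /= (_ : w _ = i) //; apply: val_inj.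
exists p => [|j]; first exact: size_interp.
have := dets0 j; rewrite -(p_first 0) // -(p_first 1) // -(p_first 2) //.
by move/quad_det_eq0_horner => -> //; rewrite ?(inj_eq t_inj) ?size_interp.
Qed.

Lemma digits_eq0 (d : int) (n : nat) (c : 'I_n -> int) :
  0 < d -> (forall k, `|c k| < d) -> \sum_k c k * d ^+ k = 0 -> forall k, c k = 0.
Proof.
move=> d_gt0; elim: n c => [|n IH] c c_lt sum0 k; first by case: k.
rewrite big_ord_recl expr0 mulr1 in sum0.
have tail : \sum_(i < n) c (lift ord0 i) * d ^+ (bump 0 i) =
    d * \sum_(i < n) c (lift ord0 i) * d ^+ i.
  by rewrite mulr_sumr; apply: eq_bigr => i _; rewrite exprS mulrCA.
rewrite {}tail in sum0; set T := \sum_(i < n) _ in sum0.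
have T0 : T = 0.
  have := c_lt ord0; rewrite (_ : c ord0 = - (d * T)); last by apply/eqP; rewrite -addr_eq0 sum0.
  by rewrite normrN normrM (gtr0_norm d_gt0); nia.
have c0 : c ord0 = 0 by move: sum0; rewrite T0 mulr0 addr0.
by case: (unliftP ord0 k) => [j -> | -> //]; apply: (IH (fun i => c (lift ord0 i))).
Qed.

Definition from_digits (d n m : nat) (x : 'I_n -> 'I_m) : nat := \sum_k x k * d ^ k.

Lemma from_digitsZ (d n m : nat) (x : 'I_n -> 'I_m) :
  (from_digits d x)%:Z = \sum_k (x k)%:Z * d%:Z ^+ k.
Proof.
rewrite /from_digits -natz natr_sum; apply: eq_bigr => k _.
by rewrite natrM natrX !natz.
Qed.

Lemma from_digits_lt (d n m : nat) (x : 'I_n -> 'I_m) :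
  (m <= d)%N -> (from_digits d x < d ^ n)%N.
Proof.
move=> m_le; elim: n x => [|n IH] x; first by rewrite /from_digits big_ord0.
rewrite /from_digits big_ord_recr /= expnS.
have := IH (fun k => x (widen_ord (leqnSn n) k)); rewrite /from_digits.
have := leq_trans (ltn_ord (x ord_max)) m_le.
move: (\sum_(i < n) _)%N (nat_of_ord _) (d ^ n)%N => S xn D; nia.
Qed.

Lemma from_digits_inj (d n m : nat) (x y : 'I_n -> 'I_m) :
  (m <= d)%N -> from_digits d x = from_digits d y -> x =1 y.
Proof.
move=> m_le xy k; apply: val_inj; apply/eqP; rewrite -eqz_nat -subr_eq0; apply/eqP.
have d_gt0 : 0 < d%:Z by rewrite ltz_nat (leq_trans _ m_le) // (leq_ltn_trans _ (ltn_ord (x k))).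
apply: (digits_eq0 (c := fun i => (x i)%:Z - (y i)%:Z) d_gt0 _ _ k) => [i|].
  by have := ltn_ord (x i); have := ltn_ord (y i); move: m_le; lia.
under eq_bigr do rewrite mulrBl.
by rewrite sumrB -!from_digitsZ xy subrr.
Qed.

Definition quad_det_norm (t0 t1 t2 t3 : int) : int :=
  `|vdm3 t1 t2 t3| + `|vdm3 t0 t2 t3| + `|vdm3 t0 t1 t3| + `|vdm3 t0 t1 t2|.

Lemma norm_quad_det_le (t0 t1 t2 t3 z0 z1 z2 z3 M : int) :
  0 <= z0 <= M -> 0 <= z1 <= M -> 0 <= z2 <= M -> 0 <= z3 <= M ->
  `|quad_det t0 t1 t2 t3 z0 z1 z2 z3| <= quad_det_norm t0 t1 t2 t3 * M.
Proof.
rewrite /quad_det /quad_det_norm.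
by move: (vdm3 _ _ _) (vdm3 _ _ _) (vdm3 _ _ _) (vdm3 _ _ _) => *; nia.
Qed.

Lemma quad_det_sum (R : comRingType) (I : finType) t0 t1 t2 t3 (z0 z1 z2 z3 : I -> R) :
  quad_det t0 t1 t2 t3 (\sum_k z0 k) (\sum_k z1 k) (\sum_k z2 k) (\sum_k z3 k) =
  \sum_k quad_det t0 t1 t2 t3 (z0 k) (z1 k) (z2 k) (z3 k).
Proof. by rewrite /quad_det !mulr_sumr -!sumrN -!big_split. Qed.

Lemma quad_det_digitwise (t0 t1 t2 t3 : int) (d n m : nat) (x0 x1 x2 x3 : 'I_n -> 'I_m) :
  quad_det_norm t0 t1 t2 t3 * m%:Z < d%:Z ->
  quad_det t0 t1 t2 t3 (from_digits d x0)%:Z (from_digits d x1)%:Z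
    (from_digits d x2)%:Z (from_digits d x3)%:Z = 0 ->
  forall k, quad_det t0 t1 t2 t3 (x0 k)%:Z (x1 k)%:Z (x2 k)%:Z (x3 k)%:Z = 0.
Proof.
move=> d_big det0; apply: digits_eq0.
- by apply: le_lt_trans d_big; rewrite mulr_ge0 // /quad_det_norm !addr_ge0.
- move=> k; apply: le_lt_trans d_big; apply: norm_quad_det_le;
  by rewrite lez_nat ltnW ?ltn_ord.
- rewrite -[X in _ = X]det0 !from_digitsZ quad_det_sum; apply: eq_bigr => k _.
  by rewrite /quad_det; ring.
Qed.

Lemma quadratic_digits (r : 'I_5 -> int) (d n m : nat) (x : 'I_5 -> 'I_n -> 'I_m) :
  injective r -> (forall j, quad_det_norm (r 0) (r 1) (r 2) (r j) * m%:Z < d%:Z) ->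
  (exists2 P : {poly rat}, (size P <= 3)%N &
     forall i, P.[(r i)%:~R] = (from_digits d (x i))%:R) ->
  forall k, exists2 q : {poly rat}, (size q <= 3)%N & forall i, q.[(r i)%:~R] = (x i k)%:R.
Proof.
move=> r_inj d_big [P P3 P_digits] k.
apply: (quad_dets_eq0_quadratic (t := fun i => (r i)%:~R)) => [i j /intr_inj/r_inj //|j].
have det0 : quad_det (r 0) (r 1) (r 2) (r j) (from_digits d (x 0))%:Z
    (from_digits d (x 1))%:Z (from_digits d (x 2))%:Z (from_digits d (x j))%:Z = 0.
  apply: (@intr_inj rat); rewrite rmorph_quad_det rmorph0 /=.
  have P_digitsZ i : P.[(r i)%:~R] = ((from_digits d (x i))%:Z)%:~R := P_digits i.
  by rewrite -!P_digitsZ quad_det_horner.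
have := quad_det_digitwise (d_big j) det0 k => /(congr1 (intmul (1 : rat))).
by rewrite rmorph_quad_det rmorph0.
Qed.

Lemma sphere_digits_QC5_free (r : 'I_5 -> int) (N d n m R : nat) (B : {set 'I_N}) :
  injective r -> (forall j, quad_det_norm (r 0) (r 1) (r 2) (r j) * m%:Z < d%:Z) ->
  (forall b, b \in B -> exists2 x : 'I_n -> 'I_m,
     (\sum_k x k ^ 2 = R)%N & nat_of_ord b = from_digits d x) ->
  ~ contains_QC5 r B.
Proof.
move=> r_inj d_big B_sphere [P [/andP [P2 P3] P_B]].
have /fin_all_exists2 [x x_sphere P_digits] : forall i, exists2 x : 'I_n -> 'I_m,
    (\sum_k x k ^ 2 = R)%N & P.[(r i)%:~R] = (from_digits d x)%:R.
  by move=> i; have [b /B_sphere [x x_sphere ->] ->] := P_B i; exists x.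
have /fin_all_exists2 [q q3 q_digits] := quadratic_digits r_inj d_big (ex_intro2 _ _ P P3 P_digits).
have q_norm i : \sum_k (q k).[(r i)%:~R] ^+ 2 = R%:R.
  rewrite -(x_sphere i) natr_sum; apply: eq_bigr => k _.
  by rewrite q_digits natrX.
have rQ_inj : injective (fun i => (r i)%:~R : rat) by move=> i j /intr_inj/r_inj.
have q_const := equal_norms_polys_const (d := 2) rQ_inj q3
  (fun i j => etrans (q_norm i) (esym (q_norm j))).
have x_const i : x i =1 x 0.
  move=> k; apply/val_inj/eqP; rewrite -(eqr_nat rat) -!q_digits.
  by rewrite [q k]size1_polyC ?q_const // !hornerC.
have /negP [] : ~~ (size P <= 1)%N by rewrite -ltnNge.
apply: (size_le1_const_on (c := P.[(r 0)%:~R]) (s := [seq (r i)%:~R | i <- enum 'I_5])).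
- by rewrite (map_inj_uniq rQ_inj) enum_uniq.
- by rewrite size_map size_enum_ord; apply: leq_trans P3 _.
move=> _ /mapP [i _ ->]; rewrite !P_digits; congr (_ %:R).
by apply: eq_bigr => k _; rewrite x_const.
Qed.

Lemma exists_large_fiber (T : finType) (K : nat) (g : T -> 'I_K.+1) :
  exists y, (#|T| <= #|[set x | g x == y]| * K.+1)%N.
Proof.
have [y _ y_max] := @arg_maxnP _ ord0 predT (fun y => #|[set x | g x == y]|) isT.
exists y; rewrite -[#|T|]sum1_card (partition_big g predT) //=.
under eq_bigr do rewrite sum1dep_card.
apply: (@leq_trans (\sum_(z < K.+1) #|[set x | g x == y]|)).
  by apply: leq_sum => z _; apply: y_max.
by rewrite sum_nat_const card_ord mulnC.
Qed.

Lemma digit_image_set (N d n m : nat) (S : {set {ffun 'I_n -> 'I_m}}) :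
  (m <= d)%N -> (d ^ n <= N)%N ->
  exists B : {set 'I_N}, #|B| = #|S| /\
    forall b, b \in B -> exists2 x, x \in S & nat_of_ord b = from_digits d x.
Proof.
move=> m_le dn_le.
pose f (x : {ffun 'I_n -> 'I_m}) : 'I_N := Ordinal (leq_trans (from_digits_lt x m_le) dn_le).
have f_inj : injective f.
  by move=> x y /(congr1 val)/(from_digits_inj m_le) xy; apply/ffunP.
exists (f @: S); split; first exact: card_imset.
by move=> _ /imsetP [x xS ->]; exists x.
Qed.

Lemma behrend_construction (r : 'I_5 -> int) : injective r ->
  exists C : nat, (0 < C)%N /\ forall N n m : nat, (0 < m)%N -> ((C * m) ^ n <= N)%N ->
    exists B : {set 'I_N}, (m ^ n <= #|B| * (n * m ^ 2).+1)%N /\ ~ contains_QC5 r B.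
Proof.
move=> r_inj; pose L := \sum_j quad_det_norm (r 0) (r 1) (r 2) (r j).
have L_ge j : 0 <= quad_det_norm (r 0) (r 1) (r 2) (r j) <= L.
  rewrite /L (bigD1 j) //= -[X in X <= _]addr0 lerD2l sumr_ge0 ?andbT;
  by rewrite /quad_det_norm ?addr_ge0.
exists `|L|.+1; split => // N n m m_gt0 CmN; set d := (`|L|.+1 * m)%N in CmN.
have L_ge0 : 0 <= L by have /andP [/le_trans] := L_ge ord0; apply.
have dZ : d%:Z = (L + 1) * m%:Z by rewrite /d PoszM -[(`|L|.+1)%N]addn1 PoszD gez0_abs.
have d_big j : quad_det_norm (r 0) (r 1) (r 2) (r j) * m%:Z < d%:Z.
  by have := L_ge j; rewrite dZ; nia.
have sq_lt (x : {ffun 'I_n -> 'I_m}) : (\sum_k x k ^ 2 < (n * m ^ 2).+1)%N.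
  rewrite ltnS; apply: (@leq_trans (\sum_(k < n) m ^ 2)).
    by apply: leq_sum => k _; rewrite leq_exp2r // ltnW.
  by rewrite sum_nat_const card_ord.
have [R R_fiber] := exists_large_fiber (fun x => Ordinal (sq_lt x)).
have [B [B_card B_sphere]] := digit_image_set [set x | Ordinal (sq_lt x) == R]
  (leq_pmull _ (ltn0Sn _)) CmN.
exists B; split.
  by rewrite B_card; move: R_fiber; rewrite card_ffun !card_ord.
apply: (sphere_digits_QC5_free (R := R) r_inj d_big) => b /B_sphere [x].
by rewrite inE => /eqP <-; exists x.
Qed.

(* s stands for sqrt (ln N): n = floor s digits in base C m, m = floor (e^s / C). *)
Section BehrendParameters.
Variables (R : realType) (C : nat) (s : R).
Hypotheses (C_gt0 : (0 < C)%N) (s_ge1 : 1 <= s) (C_le : 2 * C%:R <= expR s).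

Let n := Num.truncn s.
Let m := Num.truncn (expR s / C%:R).

Let C_pos : (0 : R) < C%:R. Proof. by rewrite ltr0n. Qed.
Let q_ge2 : 2 <= expR s / C%:R. Proof. by rewrite ler_pdivlMr. Qed.
Let n_le : n%:R <= s. Proof. by have /andP [] := truncn_itv (le_trans ler01 s_ge1). Qed.
Let n_gt : s - 1 < n%:R.
Proof. by have /andP [_] := truncn_itv (le_trans ler01 s_ge1); rewrite -natr1; lra. Qed.
Let m_le : m%:R <= expR s / C%:R.
Proof. by have /andP [] := truncn_itv (le_trans (ler0n _ 2) q_ge2). Qed.

Lemma behrend_m_gt0 : (0 < m)%N.
Proof. by rewrite truncn_gt0; apply: le_trans q_ge2; rewrite ler1n. Qed.

Lemma behrend_pow_le : ((C * m) ^ n)%:R <= expR (s * s) :> R.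
Proof.
have s_ge0 : 0 <= s by apply: le_trans s_ge1.
rewrite natrX; apply: (@le_trans _ _ (expR s ^+ n)).
  apply: lerXn2r; rewrite ?nnegrE ?expR_ge0 //.
  by rewrite natrM mulrC -ler_pdivlMr.
by rewrite -expRM_natl ler_expR ler_wpM2r.
Qed.

Let K : R := ln (2 * C%:R).
Let expR_K : expR K = 2 * C%:R. Proof. by rewrite lnK // posrE mulr_gt0. Qed.
Let K_ge0 : 0 <= K. Proof. by rewrite ln_ge0 // -natrM ler1n muln_gt0. Qed.
Let K_le : K <= s. Proof. by rewrite -ler_expR expR_K. Qed.

Let pow_ge : expR (s * s - (1 + K) * s) <= (m ^ n)%:R.
Proof.
have m_ge : expR (s - K) <= m%:R.
  rewrite exp.expRD expRN expR_K.
  have /andP [_] := truncn_itv (le_trans (ler0n _ 2) q_ge2); rewrite -/m -natr1.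
  have : (1 : R) <= m%:R by rewrite ler1n behrend_m_gt0.
  rewrite invfM mulrCA mulrC; lra.
rewrite natrX; apply: (@le_trans _ _ (expR (s - K) ^+ n)); last first.
  by rewrite lerXn2r ?nnegrE ?expR_ge0 ?ler0n.
rewrite -expRM_natl ler_expR.
have : 0 <= (n%:R - (s - 1)) * (s - K) by rewrite mulr_ge0 // subr_ge0 ?K_le // ltW.
by have := K_ge0; lra.
Qed.

Let card_le : ((n * m ^ 2).+1)%:R <= expR (4%:R * s).
Proof.
have e_ge : 1 + s <= expR s := expR_ge1Dx s.
have m_le' : m%:R <= expR s.
  apply: le_trans m_le _; rewrite ler_pdivrMr // ler_peMr ?expR_ge0 //.
  by rewrite ler1n.
rewrite expRM_natl -natr1 natrM natrX.
have n_le' : n%:R <= expR s by have := n_le; lra.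
have := C_le; set e := expR s in m_le' n_le' * => C_le'.
have e2 : 2 <= e by apply: le_trans C_le'; rewrite ler_pMr ?ler1n // ltr0n.
have m2 : m%:R ^+ 2 <= e ^+ 2 by rewrite lerXn2r ?nnegrE ?ler0n //; lra.
have : n%:R * m%:R ^+ 2 <= e * e ^+ 2 by apply: ler_pM; rewrite ?ler0n ?exprn_ge0.
have : 0 <= (e - 2) * e ^+ 3 by rewrite mulr_ge0 ?exprn_ge0 //; lra.
have : 1 <= e ^+ 3 by rewrite exprn_ege1 //; lra.
rewrite !exprS expr0; lra.
Qed.

Lemma behrend_ratio_ge :
  expR (s * s - (5 + ln (2 * C%:R : R)) * s) * ((n * m ^ 2).+1)%:R <= (m ^ n)%:R.
Proof.
apply: le_trans pow_ge; apply: le_trans (ler_wpM2l (expR_ge0 _) card_le) _.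
by rewrite -exp.expRD ler_expR -/K; lra.
Qed.

End BehrendParameters.

Lemma subexp_density (R : realType) (P : forall N : nat, {set 'I_N} -> Prop) (C : nat) :
  (0 < C)%N ->
  (forall N n m : nat, (0 < m)%N -> ((C * m) ^ n <= N)%N ->
     exists B : {set 'I_N}, (m ^ n <= #|B| * (n * m ^ 2).+1)%N /\ P N B) ->
  exists c : R, 0 < c /\ forall N : nat, (2 <= N)%N ->
    exists B : {set 'I_N}, N%:R * expR (- (c * Num.sqrt (ln (N%:R : R)))) < #|B|%:R /\ P N B.
Proof.
move=> C_gt0 construction; set K : R := ln (2 * C%:R).
have K_ge0 : 0 <= K by rewrite ln_ge0 // -natrM ler1n muln_gt0.
exists (6 + K); split => [|N N_ge2]; first lra.
set s := Num.sqrt (ln (N%:R : R)).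
have ln_gt0 : 0 < ln (N%:R : R) by rewrite ln_gt0 // ltr1n.
have s_gt0 : 0 < s by rewrite sqrtr_gt0.
have N_eq : N%:R = expR (s * s) :> R.
  by rewrite -expr2 sqr_sqrtr ?ltW // lnK // posrE ltr0n (ltn_trans _ N_ge2).
rewrite N_eq -exp.expRD.
have gap : s * s - (6 + K) * s < s * s - (5 + K) * s by lra.
have [/andP [s_ge1 C_le] | small] := boolP ((1 <= s) && (2 * C%:R <= expR s)).
- set n := Num.truncn s; set m := Num.truncn (expR s / C%:R).
  have m_gt0 : (0 < m)%N by apply: behrend_m_gt0.
  have CmN : ((C * m) ^ n <= N)%N by rewrite -(ler_nat R) N_eq; apply: behrend_pow_le.
  have [B [B_large PB]] := construction N n m m_gt0 CmN.
  exists B; split => //.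
  have ratio := behrend_ratio_ge C_gt0 s_ge1 C_le; rewrite -/n -/m -/K in ratio.
  rewrite -(ltr_pM2r (ltr0Sn _ (n * m ^ 2))).
  apply: (lt_le_trans _ (le_trans ratio _)).
    by rewrite ltr_pM2r ?ltr0Sn // ltr_expR.
  by rewrite -natrM ler_nat.
- have [B [B_ge1 PB]] := construction N 0 1 isT (ltnW N_ge2).
  exists B; split => //; apply: lt_le_trans (_ : 1 <= _); last first.
    by rewrite ler1n; rewrite expn0 muln1 in B_ge1.
  have s_lt : s < 6 + K.
    move: small; rewrite negb_and -!ltNge => /orP [s_lt1 | C_gt]; first lra.
    by move: C_gt; rewrite -[2 * C%:R]lnK ?posrE ?mulr_gt0 ?ltr0n // ltr_expR -/K; lra.
  have : 0 < s * (6 + K - s) by rewrite mulr_gt0 // subr_gt0.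
  by rewrite expR_lt1; lra.
Qed.

Unset Implicit Arguments.

Theorem theorem12p7 (r : 'I_5 -> int) (hr : injective r) :
  exists c : Rdefinitions.R, 0 < c /\
    forall N : nat, (2 <= N)%N ->
      exists B : {set 'I_N},
        (N%:R * expR (- (c * Num.sqrt (ln (N%:R : Rdefinitions.R)))) < #|B|%:R)
        /\ ~ contains_QC5 r B.
Proof.
have [C [C_gt0 construction]] := behrend_construction hr.
exact: subexp_density C_gt0 construction.
Qed.
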